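(* Under the standing assumptions (A1)–(A6) below, the aNETT regularizer $\mathcal R\colon \mathbb X\to[0,\infty]$, $\mathcal R(x)=\psi(\mathbf E(x))+\frac{c}{2}\|x-\mathbf D(\mathbf E(x))\|^2$, is coercive.
   Context: Standing assumptions (A1)–(A6): (A1) $\mathbb X,\mathbb Y$ are real Hilbert spaces; (A2) $\Xi=\ell^2(\Lambda)$ for a countable index set $\Lambda$; (A3) $\mathbf K\colon\mathbb X\to\mathbb Y$ is (possibly nonlinear and) weakly sequentially continuous; (A4) the encoder $\mathbf E\colon\mathbb X\to\Xi$ is weakly sequentially continuous; (A5) the decoder $\mathbf D\colon\Xi\to\mathbb X$ is weakly sequentially continuous; (A6) $\psi\colon\Xi\to[0,\infty]$ is coercive and weakly sequentially lower semicontinuous. A constant $c>0$ is fixed. A functional $F\colon H\to[0,\infty]$ on a normed space is called coercive if every sequence $(x_n)$ with $(F(x_n))_n$ bounded is itself bounded in norm. *)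

From Stdlib Require Import Reals Lra List.
Open Scope R_scope.

Record Hilbert := {
  hcar :> Type;
  hadd : hcar -> hcar -> hcar;
  hopp : hcar -> hcar;
  hzero : hcar;
  hscal : R -> hcar -> hcar;
  hinner : hcar -> hcar -> R;
  hadd_assoc : forall x y z, hadd x (hadd y z) = hadd (hadd x y) z;
  hadd_comm : forall x y, hadd x y = hadd y x;
  hadd_zero : forall x, hadd x hzero = x;
  hadd_opp : forall x, hadd x (hopp x) = hzero;
  hscal_one : forall x, hscal 1 x = x;
  hscal_assoc : forall a b x, hscal a (hscal b x) = hscal (a * b) x;
  hscal_distr_l : forall a x y, hscal a (hadd x y) = hadd (hscal a x) (hscal a y);
  hscal_distr_r : forall a b x, hscal (a + b) x = hadd (hscal a x) (hscal b x);
  hinner_sym : forall x y, hinner x y = hinner y x;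
  hinner_add_l : forall x y z, hinner (hadd x y) z = hinner x z + hinner y z;
  hinner_scal_l : forall a x y, hinner (hscal a x) y = a * hinner x y;
  hinner_pos : forall x, 0 <= hinner x x;
  hinner_def : forall x, hinner x x = 0 -> x = hzero;
  hcomplete : forall u : nat -> hcar,
    (forall eps, 0 < eps -> exists N, forall m n, (N <= m)%nat -> (N <= n)%nat ->
        sqrt (hinner (hadd (u m) (hopp (u n))) (hadd (u m) (hopp (u n)))) < eps) ->
    exists x, forall eps, 0 < eps -> exists N, forall n, (N <= n)%nat ->
        sqrt (hinner (hadd (u n) (hopp x)) (hadd (u n) (hopp x))) < eps
}.

Arguments hadd {h}. Arguments hopp {h}. Arguments hzero {h}.
Arguments hscal {h}. Arguments hinner {h}.

Definition hnorm {H : Hilbert} (x : H) : R := sqrt (hinner x x).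
Definition hsub {H : Hilbert} (x y : H) : H := hadd x (hopp y).

Definition weak_cv {H : Hilbert} (u : nat -> H) (x : H) : Prop :=
  forall y : H, Un_cv (fun n => hinner (u n) y) (hinner x y).

Definition weakly_seq_continuous {H1 H2 : Hilbert} (F : H1 -> H2) : Prop :=
  forall (u : nat -> H1) (x : H1), weak_cv u x -> weak_cv (fun n => F (u n)) (F x).

(* Extended nonnegative reals [0, ∞]: Fin r (with r >= 0 imposed separately) or PInf. *)
Inductive ereal : Type := Fin (r : R) | PInf.

Definition ele (a b : ereal) : Prop :=
  match a, b with
  | Fin x, Fin y => x <= y
  | _, PInf => True
  | PInf, Fin _ => False
  end.

Definition eadd (a b : ereal) : ereal :=
  match a, b with
  | Fin x, Fin y => Fin (x + y)
  | _, _ => PInf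
  end.

Definition nonneg_valued {H : Hilbert} (F : H -> ereal) : Prop :=
  forall x r, F x = Fin r -> 0 <= r.

Definition coercive {H : Hilbert} (F : H -> ereal) : Prop :=
  forall u : nat -> H,
    (exists M : R, forall n, ele (F (u n)) (Fin M)) ->
    exists B : R, forall n, hnorm (u n) <= B.

(* Weak sequential lower semicontinuity: u_n ⇀ x implies F x <= liminf F(u_n),
   written out: for every real a < F x, eventually a < F(u_n). *)
Definition weakly_seq_lsc {H : Hilbert} (F : H -> ereal) : Prop :=
  forall (u : nat -> H) (x : H), weak_cv u x ->
    forall a : R, ~ ele (F x) (Fin a) ->
      exists N, forall n, (N <= n)%nat -> ~ ele (F (u n)) (Fin a).

Definition countable (L : Type) : Prop :=
  exists f : L -> nat, forall a b, f a = f b -> a = b.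

Definition sumsq_list {L : Type} (f : L -> R) (l : list L) : R :=
  fold_right (fun i acc => f i * f i + acc) 0 l.

Definition l2_sumsq {L : Type} (f : L -> R) (s : R) : Prop :=
  is_lub (fun t => exists l : list L, NoDup l /\ t = sumsq_list f l) s.

Definition in_l2 {L : Type} (f : L -> R) : Prop := exists s, l2_sumsq f s.

(* Ξ = ℓ²(Λ): T is a linear bijection of Ξ onto ℓ²(Λ) preserving the norm. *)
Definition is_l2_of (Xi : Hilbert) (L : Type) (T : Xi -> (L -> R)) : Prop :=
  (forall x y i, T (hadd x y) i = T x i + T y i) /\
  (forall a x i, T (hscal a x) i = a * T x i) /\
  (forall x y, (forall i, T x i = T y i) -> x = y) /\
  (forall f, in_l2 f -> exists x, forall i, T x i = f i) /\
  (forall x, l2_sumsq (T x) (hinner x x)).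

Definition aNETT {X Xi : Hilbert} (E : X -> Xi) (D : Xi -> X) (psi : Xi -> ereal)
  (c : R) (x : X) : ereal :=
  eadd (psi (E x)) (Fin (c / 2 * (hnorm (hsub x (D (E x)))) ^ 2)).

From Stdlib Require Import Reals Lra Lia ZArith List.
From Stdlib Require Import Classical ClassicalEpsilon FunctionalExtensionality.
Open Scope R_scope.

(* Coercivity of the aNETT regularizer
     R(x) = psi(E x) + c/2 |x - D(E x)|^2.
   If R(x_n) <= M, then psi(E x_n) <= M and |x_n - D(E x_n)|^2 <= 2M/c.
   Coercivity of psi bounds the codes E x_n; it remains to see that the
   weakly sequentially continuous decoder D maps bounded sequences of
   Xi = l^2(Lam) to bounded sequences, and then |x_n| <= |x_n - D(E x_n)|
   + |D(E x_n)| is bounded.  That boundedness rests on two classical facts: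
   - uniform boundedness: a weakly convergent sequence is bounded in norm,
     proved by a gliding-hump construction using completeness of the space;
   - weak sequential compactness: a bounded sequence in l^2(Lam), Lam
     countable, has a weakly convergent subsequence, obtained by a diagonal
     extraction of coordinatewise convergent subsequences. *)

Section InnerProductAlgebra.
Context {H : Hilbert}.

Lemma inner_zero_l (y : H) : hinner hzero y = 0.
Proof.
  assert (E : hinner (hadd (@hzero H) hzero) y = hinner hzero y) by now rewrite hadd_zero.
  rewrite hinner_add_l in E; lra.
Qed.

Lemma inner_opp_l (x y : H) : hinner (hopp x) y = - hinner x y.
Proof.
  assert (E : hinner (hadd x (hopp x)) y = 0) by (rewrite hadd_opp; apply inner_zero_l).
  rewrite hinner_add_l in E; lra.
Qed.

Lemma inner_sub_l (x y z : H) : hinner (hsub x y) z = hinner x z - hinner y z.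
Proof. unfold hsub; rewrite hinner_add_l, inner_opp_l; ring. Qed.

Lemma inner_sub_r (x y z : H) : hinner z (hsub x y) = hinner z x - hinner z y.
Proof. rewrite hinner_sym, inner_sub_l, !(hinner_sym _ z); reflexivity. Qed.

Lemma inner_add_r (x y z : H) : hinner x (hadd y z) = hinner x y + hinner x z.
Proof. rewrite hinner_sym, hinner_add_l, !(hinner_sym _ x); reflexivity. Qed.

Lemma inner_scal_r a (x y : H) : hinner x (hscal a y) = a * hinner x y.
Proof. rewrite hinner_sym, hinner_scal_l, hinner_sym; reflexivity. Qed.

Lemma inner_sub_sub (a b : H) :
  hinner (hsub a b) (hsub a b) = hinner a a - 2 * hinner a b + hinner b b.
Proof. rewrite !inner_sub_l, !inner_sub_r, (hinner_sym _ b a); ring. Qed.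

Lemma inner_add_add (a b : H) :
  hinner (hadd a b) (hadd a b) = hinner a a + 2 * hinner a b + hinner b b.
Proof. rewrite hinner_add_l, !inner_add_r, (hinner_sym _ b a); ring. Qed.

Lemma hsub_diag (x : H) : hsub x x = hzero.
Proof. apply hadd_opp. Qed.

Lemma hsub_add_cancel (x y : H) : hadd (hsub x y) y = x.
Proof.
  unfold hsub.
  rewrite <- hadd_assoc, (hadd_comm _ (hopp y)), hadd_opp, hadd_zero; reflexivity.
Qed.

Lemma hsub_add_l (a b c : H) : hsub (hadd a b) c = hadd (hsub a c) b.
Proof. unfold hsub; rewrite <- !hadd_assoc, (hadd_comm _ b); reflexivity. Qed.

Lemma hsub_chain (a b c : H) : hsub a c = hadd (hsub a b) (hsub b c).
Proof.
  unfold hsub; rewrite <- hadd_assoc, (hadd_assoc _ (hopp b)), (hadd_comm _ (hopp b)).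
  rewrite hadd_opp, (hadd_comm _ hzero), hadd_zero; reflexivity.
Qed.

Lemma hnorm_ge0 (x : H) : 0 <= hnorm x.
Proof. apply sqrt_pos. Qed.

Lemma hnorm_sq (x : H) : hnorm x * hnorm x = hinner x x.
Proof. apply sqrt_sqrt, hinner_pos. Qed.

Lemma hnorm_zero : hnorm (@hzero H) = 0.
Proof. unfold hnorm; rewrite inner_zero_l; apply sqrt_0. Qed.

Lemma hnorm_scal t (v : H) : hnorm (hscal t v) = Rabs t * hnorm v.
Proof.
  unfold hnorm; rewrite hinner_scal_l, inner_scal_r, <- Rmult_assoc.
  rewrite sqrt_mult_alt by nra.
  fold (Rsqr t); rewrite sqrt_Rsqr_abs; reflexivity.
Qed.

Lemma hnorm_sub_sym (a b : H) : hnorm (hsub a b) = hnorm (hsub b a).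
Proof. unfold hnorm; rewrite !inner_sub_sub, (hinner_sym _ b a); f_equal; ring. Qed.

Lemma hnorm_le_of_sq (x : H) r : 0 <= r -> hinner x x <= r * r -> hnorm x <= r.
Proof. intros Hr Hx; pose proof (hnorm_ge0 x); rewrite <- hnorm_sq in Hx; nra. Qed.

Lemma cauchy_schwarz (x y : H) : Rabs (hinner x y) <= hnorm x * hnorm y.
Proof.
  destruct (Req_dec (hinner y y) 0) as [Hy0|Hy0].
  { rewrite (hinner_def _ _ Hy0), (hinner_sym _ x), inner_zero_l, Rabs_R0, hnorm_zero; lra. }
  assert (Hy : 0 < hinner y y) by (pose proof (hinner_pos _ y); lra).
  (* 0 <= |x - t y|^2 for the projection coefficient t = <x,y>/<y,y>. *)
  pose proof (hinner_pos _ (hsub x (hscal (hinner x y / hinner y y) y))) as P.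
  rewrite inner_sub_sub, hinner_scal_l, !inner_scal_r in P.
  assert (Key : hinner x y * hinner x y <= hinner x x * hinner y y).
  { apply Rmult_le_compat_r with (r := hinner y y) in P; [|lra].
    replace ((hinner x x - 2 * (hinner x y / hinner y y * hinner x y)
              + hinner x y / hinner y y * (hinner x y / hinner y y * hinner y y)) * hinner y y)
      with (hinner x x * hinner y y - hinner x y * hinner x y) in P by (field; lra).
    lra. }
  apply Rsqr_incr_0_var; [| apply Rmult_le_pos; apply hnorm_ge0].
  rewrite <- Rsqr_abs; unfold Rsqr.
  replace (hnorm x * hnorm y * (hnorm x * hnorm y))
    with ((hnorm x * hnorm x) * (hnorm y * hnorm y)) by ring.
  rewrite !hnorm_sq; exact Key.
Qed.

Lemma hnorm_triangle (x y : H) : hnorm (hadd x y) <= hnorm x + hnorm y.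
Proof.
  apply hnorm_le_of_sq; [pose proof (hnorm_ge0 x); pose proof (hnorm_ge0 y); lra|].
  rewrite inner_add_add, <- (hnorm_sq x), <- (hnorm_sq y).
  pose proof (cauchy_schwarz x y); pose proof (Rle_abs (hinner x y)); nra.
Qed.

Lemma hnorm_le_sub (x y : H) : hnorm x <= hnorm (hsub x y) + hnorm y.
Proof. rewrite <- (hsub_add_cancel x y) at 1; apply hnorm_triangle. Qed.

Lemma hnorm_sub_le (x y : H) : hnorm (hsub x y) <= hnorm x + hnorm y.
Proof.
  replace (hnorm y) with (hnorm (hopp y)); [apply hnorm_triangle|].
  unfold hnorm; rewrite inner_opp_l, (hinner_sym _ y (hopp y)), inner_opp_l, Ropp_involutive.
  reflexivity.
Qed.

End InnerProductAlgebra.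

Lemma nat_unbounded r : exists n : nat, r < INR n.
Proof.
  destruct (archimed r) as [Hup _].
  exists (Z.to_nat (up r)).
  destruct (Z_lt_le_dec (up r) 0) as [Hneg|Hnn].
  - apply IZR_lt in Hneg; pose proof (pos_INR (Z.to_nat (up r))); lra.
  - rewrite INR_IZR_INZ, Z2Nat.id by assumption; lra.
Qed.

Lemma cv_const c : Un_cv (fun _ => c) c.
Proof.
  intros e He; exists 0%nat; intros; unfold R_dist; rewrite Rminus_diag, Rabs_R0; exact He.
Qed.

Lemma half_pow_pos n : 0 < (/2)^n.
Proof. apply pow_lt; lra. Qed.

Lemma half_pow_le1 n : (/2)^n <= 1.
Proof. induction n; simpl; lra. Qed.

Section NormConvergence.
Context {H : Hilbert}.

Definition norm_cv (u : nat -> H) (x : H) : Prop :=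
  forall eps, 0 < eps -> exists N, forall n, (N <= n)%nat -> hnorm (hsub (u n) x) < eps.

Lemma geometric_steps_converge (ys : nat -> H) :
  (forall m, hnorm (hsub (ys (S m)) (ys m)) <= (/2)^m) -> exists y, norm_cv ys y.
Proof.
  intro Hstep.
  (* Telescoping: the steps from p on sum to less than 2 (1/2)^p. *)
  assert (Tail : forall p i,
    hnorm (hsub (ys (i + p)%nat) (ys p)) <= 2 * (/2)^p - 2 * (/2)^(i + p)).
  { intros p i; induction i as [|i IH]; simpl.
    - rewrite hsub_diag, hnorm_zero; lra.
    - rewrite (hsub_chain _ (ys (i + p)%nat)).
      eapply Rle_trans; [apply hnorm_triangle|].
      pose proof (Hstep (i + p)%nat); lra. }
  apply (hcomplete H ys).
  intros eps Heps.
  destruct (pow_lt_1_zero (/2) ltac:(rewrite Rabs_right; lra) (eps / 2) ltac:(lra)) as [N HN].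
  exists N; intros m n Hm Hn; change (hnorm (hsub (ys m) (ys n)) < eps).
  assert (Near : forall p i, (N <= p)%nat -> hnorm (hsub (ys (i + p)%nat) (ys p)) < eps).
  { intros p i Hp.
    pose proof (HN p Hp); pose proof (half_pow_pos (i + p)); pose proof (Tail p i).
    rewrite Rabs_right in * by (apply Rle_ge, pow_le; lra); lra. }
  destruct (Nat.le_gt_cases n m).
  - replace m with ((m - n) + n)%nat by lia; apply Near; lia.
  - rewrite hnorm_sub_sym; replace n with ((n - m) + m)%nat by lia; apply Near; lia.
Qed.

Lemma inner_norm_cv (ys : nat -> H) (y z : H) :
  norm_cv ys y -> Un_cv (fun p => hinner z (ys p)) (hinner z y).
Proof.
  intros Hy eps Heps.
  pose proof (hnorm_ge0 z).
  destruct (Hy (eps / (hnorm z + 1))) as [N HN]; [apply Rdiv_lt_0_compat; lra|].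
  exists N; intros n Hn; unfold R_dist.
  rewrite <- inner_sub_r.
  eapply Rle_lt_trans; [apply cauchy_schwarz|].
  specialize (HN n Hn); pose proof (hnorm_ge0 (hsub (ys n) y)).
  apply Rle_lt_trans with ((hnorm z + 1) * hnorm (hsub (ys n) y)); [nra|].
  apply Rmult_lt_reg_l with (/ (hnorm z + 1)); [apply Rinv_0_lt_compat; lra|].
  rewrite <- Rmult_assoc, Rinv_l by lra; unfold Rdiv in HN; lra.
Qed.

End NormConvergence.

(* Gliding hump.  Writing k m for [hump_idx m], we build
   y = lim y_m with y_(m+1) = y_m + w_m z_(k m), where z_(k m) is chosen so
   large that the new term dominates <z_(k m), y_m>, and the weight w_m so
   small that all later terms together perturb <z_(k m), _> by at most 1.
   Then <z_(k m), y> >= m + 1 for every m, contradicting the bound M y. *)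
Section GlidingHump.
Context {H : Hilbert}.
Variable z : nat -> H.
Variable M : H -> R.
Hypothesis M_bound : forall y n, Rabs (hinner (z n) y) <= M y.
Variable pick : R -> nat.
Hypothesis pick_large : forall A, A <= hnorm (z (pick A)).

Lemma M_ge0 y : 0 <= M y.
Proof. pose proof (M_bound y 0); pose proof (Rabs_pos (hinner (z 0%nat) y)); lra. Qed.

Definition hump_target (m : nat) (y : H) (A : R) : R := 2 ^ m * (INR m + 2 + M y) * A.

Fixpoint hump (m : nat) : H * R :=
  match m with
  | O => (hzero, 1)
  | S m' =>
      let y := fst (hump m') in
      let A := snd (hump m') in
      let v := z (pick (hump_target m' y A)) in
      (hadd y (hscal ((/2) ^ m' / (A * hnorm v)) v), hnorm v)
  end.

Definition hump_sum (m : nat) : H := fst (hump m).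
Definition hump_size (m : nat) : R := snd (hump m).
Definition hump_idx (m : nat) : nat := pick (hump_target m (hump_sum m) (hump_size m)).
Definition hump_weight (m : nat) : R := (/2) ^ m / (hump_size m * hump_size (S m)).

Lemma hump_size_S m : hump_size (S m) = hnorm (z (hump_idx m)).
Proof. reflexivity. Qed.

Lemma hump_sum_S m :
  hump_sum (S m) = hadd (hump_sum m) (hscal (hump_weight m) (z (hump_idx m))).
Proof. reflexivity. Qed.

Lemma hump_large m : hump_target m (hump_sum m) (hump_size m) <= hump_size (S m).
Proof. apply pick_large. Qed.

Lemma hump_size_step m : 1 <= hump_size m -> hump_size m <= hump_size (S m).
Proof.
  intro Hm; eapply Rle_trans; [|apply hump_large]; unfold hump_target.
  pose proof (pos_INR m); pose proof (M_ge0 (hump_sum m)).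
  assert (1 <= 2 ^ m) by (apply pow_R1_Rle; lra).
  assert (1 <= 2 ^ m * (INR m + 2 + M (hump_sum m))) by nra.
  nra.
Qed.

Lemma hump_size_ge1 m : 1 <= hump_size m.
Proof.
  induction m as [|m IH]; [unfold hump_size; simpl; lra|].
  pose proof (hump_size_step m IH); lra.
Qed.

Lemma hump_size_mono m j : (m <= j)%nat -> hump_size m <= hump_size j.
Proof.
  intro Hmj; induction Hmj as [|j Hmj IH]; [lra|].
  pose proof (hump_size_step _ (hump_size_ge1 j)); lra.
Qed.

Lemma hump_weight_pos m : 0 < hump_weight m.
Proof.
  pose proof (hump_size_ge1 m); pose proof (hump_size_ge1 (S m)); pose proof (half_pow_pos m).
  apply Rdiv_lt_0_compat; nra.
Qed.

Lemma hump_weight_size m : hump_weight m * hump_size (S m) = (/2) ^ m / hump_size m.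
Proof.
  pose proof (hump_size_ge1 m); pose proof (hump_size_ge1 (S m)).
  unfold hump_weight; field; lra.
Qed.

Lemma hump_step_small m : hnorm (hsub (hump_sum (S m)) (hump_sum m)) <= (/2) ^ m.
Proof.
  rewrite hump_sum_S, hsub_add_l, hsub_diag, (hadd_comm _ hzero), hadd_zero, hnorm_scal.
  rewrite Rabs_right by (apply Rle_ge, Rlt_le, hump_weight_pos).
  rewrite <- hump_size_S, hump_weight_size.
  pose proof (hump_size_ge1 m); pose proof (half_pow_pos m).
  apply Rmult_le_reg_r with (hump_size m); [lra|].
  unfold Rdiv; rewrite Rmult_assoc, Rinv_l by lra; nra.
Qed.

Lemma hump_main m : INR m + 2 <= hinner (z (hump_idx m)) (hump_sum (S m)).
Proof.
  rewrite hump_sum_S, inner_add_r, inner_scal_r, <- hnorm_sq, <- hump_size_S.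
  rewrite <- Rmult_assoc, hump_weight_size.
  set (v := hinner (z (hump_idx m)) (hump_sum m)).
  pose proof (M_bound (hump_sum m) (hump_idx m)) as Hb; pose proof (Rle_abs (- v)).
  rewrite Rabs_Ropp in *; fold v in Hb.
  assert (INR m + 2 + M (hump_sum m) <= (/2) ^ m / hump_size m * hump_size (S m)); [|lra].
  pose proof (hump_size_ge1 m); pose proof (hump_large m) as Hl; unfold hump_target in Hl.
  assert (H2 : 0 < 2 ^ m) by (apply pow_lt; lra).
  apply Rmult_le_reg_r with (2 ^ m * hump_size m); [apply Rmult_lt_0_compat; lra|].
  replace ((/2) ^ m / hump_size m * hump_size (S m) * (2 ^ m * hump_size m))
    with (hump_size (S m)) by (rewrite pow_inv; field; lra).
  lra.
Qed.

Lemma hump_cross m j : (m < j)%nat ->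
  Rabs (hump_weight j * hinner (z (hump_idx m)) (z (hump_idx j))) <= (/2) ^ j.
Proof.
  intro Hmj.
  pose proof (hump_size_mono (S m) j Hmj); pose proof (hump_size_ge1 j).
  pose proof (half_pow_pos j); pose proof (hump_weight_pos j).
  rewrite Rabs_mult, Rabs_right by lra.
  eapply Rle_trans; [apply Rmult_le_compat_l; [lra|apply cauchy_schwarz]|].
  rewrite <- !hump_size_S, (Rmult_comm (hump_size (S m))), <- Rmult_assoc, hump_weight_size.
  apply Rmult_le_reg_r with (hump_size j); [lra|].
  replace ((/2) ^ j / hump_size j * hump_size (S m) * hump_size j)
    with ((/2) ^ j * hump_size (S m)) by (field; lra).
  nra.
Qed.

Lemma hump_partial m i :
  INR m + 1 + (/2) ^ (i + m) <= hinner (z (hump_idx m)) (hump_sum (i + S m)).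
Proof.
  induction i as [|i IH].
  - pose proof (hump_main m); pose proof (half_pow_le1 m); simpl; lra.
  - replace (S i + S m)%nat with (S (i + S m)) by lia.
    rewrite hump_sum_S, inner_add_r, inner_scal_r.
    set (j := (i + S m)%nat).
    pose proof (hump_cross m j ltac:(unfold j; lia)) as Hc.
    pose proof (Rle_abs (- (hump_weight j * hinner (z (hump_idx m)) (z (hump_idx j))))).
    rewrite Rabs_Ropp in *; unfold j in *.
    replace (i + S m)%nat with (S (i + m)) in * by lia; simpl (_ ^ S _) in *; simpl (S i + m)%nat.
    simpl (_ ^ S _); lra.
Qed.

(* Passing to the limit y contradicts the bound M y. *)
Lemma hump_contradiction : False.
Proof.
  destruct (geometric_steps_converge hump_sum hump_step_small) as [y Hy].
  destruct (nat_unbounded (M y)) as [m Hm].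
  assert (Hlow : INR m + 1 <= hinner (z (hump_idx m)) y).
  { apply Rle_cv_lim
      with (fun _ => INR m + 1) (fun i => hinner (z (hump_idx m)) (hump_sum (i + S m))).
    - intro i; pose proof (hump_partial m i); pose proof (half_pow_pos (i + m)); lra.
    - apply cv_const.
    - apply (CV_shift' (fun p => hinner (z (hump_idx m)) (hump_sum p))), inner_norm_cv, Hy. }
  pose proof (M_bound y (hump_idx m)); pose proof (Rle_abs (hinner (z (hump_idx m)) y)); lra.
Qed.

End GlidingHump.

Theorem uniform_boundedness {H : Hilbert} (z : nat -> H) :
  (forall y, exists C, forall n, Rabs (hinner (z n) y) <= C) ->
  exists B, forall n, hnorm (z n) <= B.
Proof.
  intro Hpw; apply NNPP; intro Hunb.
  assert (Hlarge : forall A, exists n, A <= hnorm (z n)).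
  { intro A; apply NNPP; intro Hn; apply Hunb; exists A; intro n.
    apply Rnot_lt_le; intro; apply Hn; exists n; lra. }
  set (M y := proj1_sig (constructive_indefinite_description _ (Hpw y))).
  set (pick A := proj1_sig (constructive_indefinite_description _ (Hlarge A))).
  apply (hump_contradiction z M
           (fun y => proj2_sig (constructive_indefinite_description _ (Hpw y)))
           pick (fun A => proj2_sig (constructive_indefinite_description _ (Hlarge A)))).
Qed.

Corollary weak_cv_bounded {H : Hilbert} (u : nat -> H) (x : H) :
  weak_cv u x -> exists B, forall n, hnorm (u n) <= B.
Proof.
  intro Hw; apply uniform_boundedness; intro y.
  destruct (maj_by_pos _ (exist _ _ (Hw y))) as [C [_ HC]]; eauto.
Qed.

Section FiniteSums.
Context {L : Type}.

Definition lsum (F : L -> R) (l : list L) : R :=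
  fold_right (fun i acc => F i + acc) 0 l.

Lemma sumsq_lsum (g : L -> R) l : sumsq_list g l = lsum (fun i => g i * g i) l.
Proof. induction l as [|a l IH]; [reflexivity|]; simpl; rewrite <- IH; reflexivity. Qed.

Lemma lsum_ext_in (g h : L -> R) l : (forall i, In i l -> g i = h i) -> lsum g l = lsum h l.
Proof.
  induction l as [|a l IH]; intro E; [reflexivity|]; simpl.
  f_equal; [apply E; left; reflexivity|apply IH; intros i Hi; apply E; right; exact Hi].
Qed.

Lemma sumsq_ext_in (g h : L -> R) l :
  (forall i, In i l -> g i = h i) -> sumsq_list g l = sumsq_list h l.
Proof. intro E; rewrite !sumsq_lsum; apply lsum_ext_in; intros i Hi; rewrite E; auto. Qed.

Lemma sumsq_app (g : L -> R) l1 l2 :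
  sumsq_list g (l1 ++ l2) = sumsq_list g l1 + sumsq_list g l2.
Proof.
  induction l1 as [|a l1 IH]; simpl; [ring|].
  unfold sumsq_list in *; simpl; rewrite IH; ring.
Qed.

Lemma sumsq_ge0 (g : L -> R) l : 0 <= sumsq_list g l.
Proof. induction l as [|a l IH]; unfold sumsq_list in *; simpl; nra. Qed.

Lemma sumsq_le_pointwise (g h : L -> R) l :
  (forall i, g i * g i <= h i * h i) -> sumsq_list g l <= sumsq_list h l.
Proof.
  intro E; induction l as [|a l IH]; unfold sumsq_list in *; simpl; [lra|].
  specialize (E a); lra.
Qed.

Lemma sumsq_polarize (g h : L -> R) l :
  sumsq_list (fun i => g i + h i) l - sumsq_list (fun i => g i - h i) l
  = 4 * lsum (fun i => g i * h i) l.
Proof. induction l; unfold sumsq_list in *; simpl; [ring|]; lra. Qed.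

Lemma sumsq_incl (g : L -> R) l1 : forall l2, NoDup l1 -> NoDup l2 -> incl l1 l2 ->
  sumsq_list g l1 <= sumsq_list g l2.
Proof.
  induction l1 as [|a l1 IH]; intros l2 H1 H2 Hi; [apply sumsq_ge0|].
  destruct (in_split a l2 (Hi a (or_introl eq_refl))) as [p [q ->]].
  inversion H1 as [|? ? Ha Hl1]; subst.
  assert (IH' : sumsq_list g l1 <= sumsq_list g (p ++ q)).
  { apply IH; [exact Hl1|eapply NoDup_remove_1; eauto|].
    intros b Hb; assert (Hb' : In b (p ++ a :: q)) by (apply Hi; right; exact Hb).
    apply in_app_iff in Hb'; apply in_app_iff; destruct Hb' as [Hb'|[<-|Hb']]; tauto. }
  rewrite sumsq_app in *; unfold sumsq_list in *; simpl in *; lra.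
Qed.

Lemma sumsq_lim (F : nat -> L -> R) (G : L -> R) l :
  (forall i, Un_cv (fun n => F n i) (G i)) ->
  Un_cv (fun n => sumsq_list (F n) l) (sumsq_list G l).
Proof.
  intro HF; induction l as [|a l IH]; unfold sumsq_list in *; simpl; [apply cv_const|].
  apply CV_plus; [apply CV_mult|]; auto.
Qed.

Lemma lsum_lim (F : nat -> L -> R) (G : L -> R) l :
  (forall i, Un_cv (fun n => F n i) (G i)) -> Un_cv (fun n => lsum (F n) l) (lsum G l).
Proof. intro HF; induction l; simpl; [apply cv_const|]; apply CV_plus; auto. Qed.

Definition outside (l1 l2 : list L) : list L :=
  filter (fun i => if excluded_middle_informative (In i l1) then false else true) l2.

Lemma outside_spec l1 l2 i : In i (outside l1 l2) <-> In i l2 /\ ~ In i l1.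
Proof.
  unfold outside; rewrite filter_In.
  destruct (excluded_middle_informative (In i l1)); intuition discriminate.
Qed.

Lemma sumsq_cover (g : L -> R) l1 l2 : NoDup l1 -> NoDup l2 ->
  NoDup (l1 ++ outside l1 l2) /\
  sumsq_list g l2 <= sumsq_list g l1 + sumsq_list g (outside l1 l2).
Proof.
  intros H1 H2.
  assert (Hout : NoDup (outside l1 l2)) by (apply NoDup_filter, H2).
  assert (Hdisj : NoDup (l1 ++ outside l1 l2)).
  { apply NoDup_app; auto; intros a Ha Hb; apply outside_spec in Hb; tauto. }
  split; [exact Hdisj|].
  rewrite <- sumsq_app; apply sumsq_incl; auto.
  intros a Ha; apply in_app_iff.
  destruct (excluded_middle_informative (In a l1)); [tauto|right; apply outside_spec; tauto].
Qed.

Lemma in_l2_bounded (f : L -> R) C : (forall l, NoDup l -> sumsq_list f l <= C) -> in_l2 f.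
Proof.
  intro HC.
  destruct (completeness (fun t => exists l : list L, NoDup l /\ t = sumsq_list f l)) as [s Hs].
  - exists C; intros t [l [Hl ->]]; auto.
  - exists 0, nil; split; [constructor|reflexivity].
  - exists s; exact Hs.
Qed.

Lemma l2_sumsq_agree_off_le (f g : L -> R) l s t : NoDup l ->
  (forall i, ~ In i l -> f i = g i) -> l2_sumsq f s -> l2_sumsq g t ->
  t + sumsq_list f l <= s + sumsq_list g l.
Proof.
  intros Hl Hfg Hs Ht.
  cut (t <= s + sumsq_list g l - sumsq_list f l); [lra|].
  apply Ht; intros r [l2 [Hl2 ->]].
  destruct (sumsq_cover g l l2 Hl Hl2) as [Hnd Hcov].
  assert (Hf : sumsq_list f (l ++ outside l l2) <= s) by (apply Hs; eauto).
  rewrite sumsq_app in Hf.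
  rewrite (sumsq_ext_in g f (outside l l2)) in Hcov
    by (intros i Hi; apply outside_spec in Hi; symmetry; apply Hfg; tauto).
  lra.
Qed.

Lemma l2_sumsq_agree_off (f g : L -> R) l s t : NoDup l ->
  (forall i, ~ In i l -> f i = g i) -> l2_sumsq f s -> l2_sumsq g t ->
  t - s = sumsq_list g l - sumsq_list f l.
Proof.
  intros Hl Hfg Hs Ht.
  pose proof (l2_sumsq_agree_off_le f g l s t Hl Hfg Hs Ht).
  pose proof (l2_sumsq_agree_off_le g f l t s Hl (fun i Hi => eq_sym (Hfg i Hi)) Ht Hs).
  lra.
Qed.

End FiniteSums.

Lemma lub_approx (E : R -> Prop) s eps :
  is_lub E s -> 0 < eps -> exists t, E t /\ s - eps < t.
Proof.
  intros [Hub Hleast] He; apply NNPP; intro Hn.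
  assert (s <= s - eps); [|lra].
  apply Hleast; intros t Ht; apply Rnot_lt_le; intro; apply Hn; eauto.
Qed.

Section Coordinates.
Variable Xi : Hilbert.
Variable Lam : Type.
Variable T : Xi -> (Lam -> R).
Hypothesis hT : is_l2_of Xi Lam T.

Lemma T_add x y i : T (hadd x y) i = T x i + T y i.
Proof. apply (proj1 hT). Qed.

Lemma T_sub x y i : T (hsub x y) i = T x i - T y i.
Proof.
  assert (Hz : forall j, T hzero j = 0)
    by (intro j; pose proof (T_add hzero hzero j) as E; rewrite hadd_zero in E; lra).
  pose proof (T_add y (hopp y) i) as E; rewrite hadd_opp, Hz in E.
  unfold hsub; rewrite T_add; lra.
Qed.

Lemma T_surj f : in_l2 f -> exists x, forall i, T x i = f i.
Proof. apply (proj1 (proj2 (proj2 (proj2 hT)))). Qed.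

Lemma T_l2 x : l2_sumsq (T x) (hinner x x).
Proof. apply (proj2 (proj2 (proj2 (proj2 hT)))). Qed.

Lemma sumsq_le_norm x l : NoDup l -> sumsq_list (T x) l <= hinner x x.
Proof. intro Hl; apply (T_l2 x); exists l; auto. Qed.

Lemma coord_le x i : Rabs (T x i) <= hnorm x.
Proof.
  pose proof (sumsq_le_norm x (i :: nil) ltac:(repeat constructor; auto)) as E.
  unfold sumsq_list in E; simpl in E; rewrite Rplus_0_r in E.
  rewrite <- sqrt_Rsqr_abs; apply sqrt_le_1_alt; exact E.
Qed.

Lemma inner_finite (z w : Xi) l : NoDup l -> (forall i, ~ In i l -> T w i = 0) ->
  hinner z w = lsum (fun i => T z i * T w i) l.
Proof.
  intros Hl Hw.
  assert (Ep : T (hadd z w) = fun i => T z i + T w i)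
    by (apply functional_extensionality; intro; apply T_add).
  assert (Em : T (hsub z w) = fun i => T z i - T w i)
    by (apply functional_extensionality; intro; apply T_sub).
  pose proof (T_l2 (hadd z w)) as Lp; pose proof (T_l2 (hsub z w)) as Lm.
  rewrite Ep in Lp; rewrite Em in Lm.
  assert (Hoff : forall i, ~ In i l -> T z i - T w i = T z i + T w i)
    by (intros i Hi; rewrite (Hw i Hi); ring).
  pose proof (l2_sumsq_agree_off _ _ l _ _ Hl Hoff Lm Lp) as Hd.
  rewrite sumsq_polarize, inner_add_add, inner_sub_sub in Hd; lra.
Qed.

(* Every vector is within d of its restriction to finitely many coordinates. *)
Lemma finite_approx y d : 0 < d -> exists l p, NoDup l /\
  (forall i, ~ In i l -> T p i = 0) /\ hnorm (hsub y p) <= d.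
Proof.
  intro Hd.
  destruct (lub_approx _ _ (d * d) (T_l2 y) ltac:(nra)) as [t [[l [Hl ->]] Ht]].
  set (h i := if excluded_middle_informative (In i l) then T y i else 0).
  assert (Hh : in_l2 h).
  { apply (in_l2_bounded h (hinner y y)); intros l' Hl'.
    eapply Rle_trans; [|apply (sumsq_le_norm y l' Hl')].
    apply sumsq_le_pointwise; intro i; unfold h.
    destruct (excluded_middle_informative _); nra. }
  destruct (T_surj h Hh) as [p Hp].
  assert (Hon : forall i, In i l -> T p i = T y i)
    by (intros i Hi; rewrite Hp; unfold h; destruct (excluded_middle_informative _); tauto).
  assert (Hoff : forall i, ~ In i l -> T p i = 0)
    by (intros i Hi; rewrite Hp; unfold h; destruct (excluded_middle_informative _); tauto).
  exists l, p; split; [exact Hl|split; [exact Hoff|]].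
  assert (Hsum : forall v, hinner v p = lsum (fun i => T v i * T y i) l).
  { intro v; rewrite (inner_finite v p l Hl Hoff).
    apply lsum_ext_in; intros i Hi; rewrite Hon; auto. }
  apply hnorm_le_of_sq; [lra|].
  rewrite inner_sub_sub, !Hsum.
  rewrite (lsum_ext_in (fun i => T p i * T y i) (fun i => T y i * T y i))
    by (intros i Hi; rewrite Hon; auto).
  rewrite <- sumsq_lsum; lra.
Qed.

Lemma inner_cv_finite (u : nat -> Xi) (x p : Xi) l : NoDup l ->
  (forall i, ~ In i l -> T p i = 0) -> (forall i, Un_cv (fun n => T (u n) i) (T x i)) ->
  Un_cv (fun n => hinner (u n) p) (hinner x p).
Proof.
  intros Hl Hoff Hc.
  rewrite (inner_finite x p l Hl Hoff).
  apply Un_cv_ext with (fun n => lsum (fun i => T (u n) i * T p i) l).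
  - intro n; symmetry; apply inner_finite; auto.
  - apply lsum_lim; intro i; apply CV_mult; [apply Hc|apply cv_const].
Qed.

(* A bounded sequence converging in every coordinate converges weakly:
   split y = p + (y - p) with p finitely supported and |y - p| small. *)
Lemma weak_cv_of_coords (u : nat -> Xi) (x : Xi) B : (forall n, hnorm (u n) <= B) ->
  (forall i, Un_cv (fun n => T (u n) i) (T x i)) -> weak_cv u x.
Proof.
  intros Hu Hc y eps He.
  set (C := B + hnorm x).
  assert (HC : forall n, hnorm (hsub (u n) x) <= C)
    by (intro n; eapply Rle_trans; [apply hnorm_sub_le|]; unfold C; specialize (Hu n); lra).
  assert (C0 : 0 <= C)
    by (eapply Rle_trans; [apply (hnorm_ge0 (hsub (u 0%nat) x))|apply (HC 0%nat)]).
  set (d := eps / (2 * (C + 1))).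
  assert (Hd : 0 < d) by (unfold d; apply Rdiv_lt_0_compat; lra).
  assert (Cd : C * d < eps / 2).
  { unfold d; apply Rmult_lt_reg_r with (2 * (C + 1)); [lra|].
    replace (C * (eps / (2 * (C + 1))) * (2 * (C + 1))) with (C * eps) by (field; lra); nra. }
  destruct (finite_approx y d Hd) as [l [p [Hl [Hoff Hp]]]].
  destruct (inner_cv_finite u x p l Hl Hoff Hc (eps / 2) ltac:(lra)) as [N HN].
  exists N; intros n Hn; specialize (HN n Hn); unfold R_dist in *.
  replace (hinner (u n) y - hinner x y)
    with ((hinner (u n) p - hinner x p) + hinner (hsub (u n) x) (hsub y p))
    by (rewrite inner_sub_r, !inner_sub_l; ring).
  pose proof (cauchy_schwarz (hsub (u n) x) (hsub y p)).
  pose proof (hnorm_ge0 (hsub (u n) x)); pose proof (hnorm_ge0 (hsub y p)); pose proof (HC n).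
  assert (hnorm (hsub (u n) x) * hnorm (hsub y p) <= C * d) by (apply Rmult_le_compat; auto).
  eapply Rle_lt_trans; [apply Rabs_triang|]; lra.
Qed.

Lemma coord_limit_in_l2 (u : nat -> Xi) (g : Lam -> R) B : (forall n, hnorm (u n) <= B) ->
  (forall i, Un_cv (fun n => T (u n) i) (g i)) -> in_l2 g.
Proof.
  intros Hu Hg; apply (in_l2_bounded g (B * B)); intros l Hl.
  apply Rle_cv_lim with (fun n => sumsq_list (T (u n)) l) (fun _ => B * B).
  - intro n; eapply Rle_trans; [apply (sumsq_le_norm _ _ Hl)|].
    rewrite <- hnorm_sq; pose proof (hnorm_ge0 (u n)); specialize (Hu n); nra.
  - apply sumsq_lim, Hg.
  - apply cv_const.
Qed.

End Coordinates.

Definition increasing (th : nat -> nat) : Prop := forall n, (th n < th (S n))%nat.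

Lemma increasing_lt th : increasing th -> forall n m, (n < m)%nat -> (th n < th m)%nat.
Proof.
  intros Hth n m Hnm; induction m as [|m IH]; [lia|].
  destruct (Nat.eq_dec n m) as [->|Hne]; [apply Hth|].
  specialize (IH ltac:(lia)); specialize (Hth m); lia.
Qed.

Lemma increasing_ge_id th : increasing th -> forall n, (n <= th n)%nat.
Proof. intros Hth n; induction n; [lia|]; specialize (Hth n); lia. Qed.

Lemma increasing_comp th psi :
  increasing psi -> increasing th -> increasing (fun n => psi (th n)).
Proof. intros Hpsi Hth n; apply increasing_lt; auto. Qed.

Lemma bolzano_weierstrass (b : nat -> R) B : (forall n, Rabs (b n) <= B) ->
  exists th, increasing th /\ exists l, Un_cv (fun n => b (th n)) l.
Proof.
  intro Hb.
  destruct (Bolzano_Weierstrass b (fun r => -B <= r <= B) (compact_P3 _ _)) as [l Hl].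
  { intro n; specialize (Hb n); pose proof (Rle_abs (b n)); pose proof (Rle_abs (- b n)).
    rewrite Rabs_Ropp in *; lra. }
  assert (Near : forall n p, exists q, (p < q)%nat /\ Rabs (b q - l) < / (INR n + 1)).
  { intros n p.
    assert (Hd : 0 < / (INR n + 1)) by (apply Rinv_0_lt_compat; pose proof (pos_INR n); lra).
    destruct (Hl (disc l (mkposreal _ Hd)) (S p)) as [q [Hq Hbq]].
    - exists (mkposreal _ Hd); intros r Hr; exact Hr.
    - exists q; split; [lia|exact Hbq]. }
  set (next n p := proj1_sig (constructive_indefinite_description _ (Near n p))).
  assert (Hnext : forall n p, (p < next n p)%nat /\ Rabs (b (next n p) - l) < / (INR n + 1))
    by (intros; unfold next; apply proj2_sig).
  set (th := fix th (n : nat) : nat := match n with O => O | S m => next m (th m) end).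
  exists th; split; [intro n; apply Hnext|].
  exists l; intros eps He.
  destruct (nat_unbounded (/ eps)) as [N HN].
  exists (S N); intros n Hn; destruct n as [|m]; [lia|].
  apply Rlt_trans with (/ (INR m + 1)); [apply Hnext|].
  assert (INR N <= INR m) by (apply le_INR; lia).
  pose proof (Rinv_0_lt_compat _ He).
  rewrite <- (Rinv_inv eps); apply Rinv_lt_contravar; [apply Rmult_lt_0_compat|]; lra.
Qed.

Section Diagonal.
Variable a : nat -> nat -> R.
Variable B : R.
Hypothesis a_bounded : forall k n, Rabs (a k n) <= B.

Lemma refine_exists k (psi : nat -> nat) :
  exists th, increasing th /\ exists l, Un_cv (fun n => a k (psi (th n))) l.
Proof. apply (bolzano_weierstrass (fun n => a k (psi n)) B); intro; apply a_bounded. Qed.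

Definition refine k psi : nat -> nat :=
  proj1_sig (constructive_indefinite_description _ (refine_exists k psi)).

Lemma refine_spec k psi :
  increasing (refine k psi) /\ exists l, Un_cv (fun n => a k (psi (refine k psi n))) l.
Proof. apply (proj2_sig (constructive_indefinite_description _ (refine_exists k psi))). Qed.

(* nest k: the extraction making the first k sequences converge. *)
Fixpoint nest (k : nat) : nat -> nat :=
  match k with
  | O => fun n => n
  | S k' => fun n => nest k' (refine k' (nest k') n)
  end.

Lemma nest_increasing k : increasing (nest k).
Proof.
  induction k as [|k IH]; [intro n; simpl; lia|].
  apply (increasing_comp _ _ IH), refine_spec.
Qed.

Lemma nest_tail k i :
  exists s, (forall m, (m <= s m)%nat) /\ forall m, nest (i + S k) m = nest (S k) (s m).
Proof.
  induction i as [|i [s [Hs Heq]]]; [exists (fun m => m); split; auto|].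
  exists (fun m => s (refine (i + S k) (nest (i + S k)) m)); split.
  - intro m; eapply Nat.le_trans; [apply increasing_ge_id, refine_spec|apply Hs].
  - intro m; simpl; apply Heq.
Qed.

(* The diagonal n |-> nest n n is eventually a subsequence of every nest (S k). *)
Lemma diagonal_extraction : exists phi, (forall n, (n <= phi n)%nat) /\
  forall k, exists l, Un_cv (fun n => a k (phi n)) l.
Proof.
  exists (fun n => nest n n); split; [intro n; apply increasing_ge_id, nest_increasing|].
  intro k; destruct (proj2 (refine_spec k (nest k))) as [l Hl].
  exists l; intros eps He; destruct (Hl eps He) as [N HN].
  exists (max N (S k)); intros n Hn.
  destruct (nest_tail k (n - S k)) as [s [Hs Heq]].
  replace (n - S k + S k)%nat with n in Heq by lia.
  rewrite Heq; apply HN; specialize (Hs n); lia.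
Qed.

End Diagonal.

Lemma countable_enum (L : Type) : countable L ->
  exists e : nat -> option L, forall i, exists k, e k = Some i.
Proof.
  intros [f Hf].
  exists (fun k => match excluded_middle_informative (exists i, f i = k) with
           | left Hk => Some (proj1_sig (constructive_indefinite_description _ Hk))
           | right _ => None end).
  intro i; exists (f i).
  destruct (excluded_middle_informative _) as [Hk|Hk]; [|exfalso; eauto].
  f_equal; apply Hf, (proj2_sig (constructive_indefinite_description _ Hk)).
Qed.

Theorem weak_compactness (Xi : Hilbert) (Lam : Type) (T : Xi -> (Lam -> R)) :
  countable Lam -> is_l2_of Xi Lam T ->
  forall (u : nat -> Xi) B, (forall n, hnorm (u n) <= B) ->
  exists phi, (forall n, (n <= phi n)%nat) /\ exists x, weak_cv (fun n => u (phi n)) x.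
Proof.
  intros HL hT u B Hu.
  destruct (countable_enum Lam HL) as [e He].
  set (a k n := match e k with Some i => T (u n) i | None => 0 end).
  assert (Ha : forall k n, Rabs (a k n) <= B).
  { intros k n; unfold a; destruct (e k).
    - eapply Rle_trans; [apply (coord_le _ _ _ hT)|apply Hu].
    - rewrite Rabs_R0; eapply Rle_trans; [apply (hnorm_ge0 (u n))|apply (Hu n)]. }
  destruct (diagonal_extraction a B Ha) as [phi [Hphi Hconv]].
  exists phi; split; [exact Hphi|].
  assert (Hcoord : forall i, exists l, Un_cv (fun n => T (u (phi n)) i) l).
  { intro i; destruct (He i) as [k Hk]; destruct (Hconv k) as [l Hl]; exists l.
    unfold a in Hl; rewrite Hk in Hl; exact Hl. }
  set (g i := proj1_sig (constructive_indefinite_description _ (Hcoord i))).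
  assert (Hg : forall i, Un_cv (fun n => T (u (phi n)) i) (g i)) by (intro i; apply proj2_sig).
  pose proof (coord_limit_in_l2 _ _ _ hT _ g B (fun n => Hu (phi n)) Hg) as Hgl2.
  destruct (T_surj _ _ _ hT g Hgl2) as [x Hx].
  exists x; apply (weak_cv_of_coords _ _ _ hT _ _ B (fun n => Hu (phi n))).
  intro i; rewrite Hx; apply Hg.
Qed.

(* A weakly sequentially continuous map out of l^2(Lam), Lam countable,
   maps bounded sequences to bounded sequences: otherwise a weakly
   convergent subsequence of a blow-up sequence would have an unbounded,
   yet weakly convergent, image. *)
Theorem weakly_continuous_bounded (X Xi : Hilbert) (Lam : Type) (T : Xi -> (Lam -> R))
  (D : Xi -> X) :
  countable Lam -> is_l2_of Xi Lam T -> weakly_seq_continuous D ->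
  forall (v : nat -> Xi) B, (forall n, hnorm (v n) <= B) ->
  exists B', forall n, hnorm (D (v n)) <= B'.
Proof.
  intros HL hT HD v B Hv; apply NNPP; intro Hunb.
  assert (Hlarge : forall k : nat, exists n, INR k < hnorm (D (v n))).
  { intro k; apply NNPP; intro Hk; apply Hunb; exists (INR k); intro n.
    apply Rnot_lt_le; intro; apply Hk; eauto. }
  set (w k := v (proj1_sig (constructive_indefinite_description _ (Hlarge k)))).
  assert (Hw : forall k, INR k < hnorm (D (w k))) by (intro k; unfold w; apply proj2_sig).
  destruct (weak_compactness Xi Lam T HL hT w B (fun k => Hv _)) as [phi [Hphi [x Hx]]].
  destruct (weak_cv_bounded _ _ (HD _ _ Hx)) as [B'' HB''].
  destruct (nat_unbounded B'') as [k Hk].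
  specialize (HB'' k); specialize (Hw (phi k)); simpl in HB''.
  assert (INR k <= INR (phi k)) by (apply le_INR, Hphi).
  lra.
Qed.

Lemma aNETT_sublevel {X Xi : Hilbert} (E : X -> Xi) (D : Xi -> X) (psi : Xi -> ereal)
  c x M :
  nonneg_valued psi -> 0 < c -> ele (aNETT E D psi c x) (Fin M) ->
  ele (psi (E x)) (Fin M) /\ hnorm (hsub x (D (E x))) <= 2 * M / c + 1.
Proof.
  intros Hnn Hc HM; unfold aNETT in HM.
  destruct (psi (E x)) as [r|] eqn:Er; simpl in HM; [|contradiction].
  specialize (Hnn _ _ Er).
  set (t := hnorm (hsub x (D (E x)))) in *.
  assert (Ht : 0 <= t) by apply hnorm_ge0.
  assert (Htt : t * t <= 2 * M / c).
  { apply Rmult_le_reg_l with (c / 2); [lra|].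
    replace (c / 2 * (2 * M / c)) with M by (field; lra); simpl in HM; lra. }
  split; simpl; nra.
Qed.

Theorem mainTheorem1
  (X Y Xi : Hilbert) (Lam : Type) (T : Xi -> (Lam -> R))
  (K : X -> Y) (E : X -> Xi) (D : Xi -> X) (psi : Xi -> ereal) (c : R) :
  countable Lam ->
  is_l2_of Xi Lam T ->
  weakly_seq_continuous K ->
  weakly_seq_continuous E ->
  weakly_seq_continuous D ->
  nonneg_valued psi ->
  coercive psi ->
  weakly_seq_lsc psi ->
  0 < c ->
  coercive (aNETT E D psi c).
Proof.
  intros HL hT _ _ HD Hnn Hcoer _ Hc u [M HM].
  pose proof (fun n => aNETT_sublevel E D psi c (u n) M Hnn Hc (HM n)) as Hparts.
  destruct (Hcoer (fun n => E (u n)) (ex_intro _ M (fun n => proj1 (Hparts n)))) as [B HB].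
  destruct (weakly_continuous_bounded X Xi Lam T D HL hT HD _ B HB) as [B' HB'].
  exists (2 * M / c + 1 + B'); intro n.
  eapply Rle_trans; [apply (hnorm_le_sub (u n) (D (E (u n))))|].
  pose proof (HB' n); pose proof (proj2 (Hparts n)); lra.
Qed.
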